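(* Let $0\le s<n$, $A\in M_{s+1,n-s}$, and $\mathcal L=\{(x,\tilde xA)\mid x\in\mathbb R^s\}\subset\mathbb R^n$ with $\tilde x=(1,x)$. Then for every $v<\omega(A)$ there exists an infinite subset $\mathcal A\subset\mathbb Z\times\mathbb Z^n$ such that for every $y\in\mathcal L$, the inequality $|yq+p|<\|q\|^{-v}$ holds for all but finitely many $(p,q)\in\mathcal A$.
   Context: $yq=\sum_{i=1}^ny_iq_i$ for the row vector $y$ and $q\in\mathbb Z^n$. $\omega(A)$ is the supremum of $u>0$ for which there are infinitely many $q\in\mathbb Z^{n-s}$ with $\|Aq+p\|<\|q\|^{-u}$ for some $p\in\mathbb Z^{s+1}$. *)

From HB Require Import structures.
From mathcomp Require Import all_boot all_order all_algebra.
From mathcomp Require Import all_classical all_reals all_analysis.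
Set Implicit Arguments. Unset Strict Implicit. Unset Printing Implicit Defensive.
Import Order.TTheory GRing.Theory Num.Theory.
Local Open Scope classical_set_scope.
Local Open Scope ring_scope.

Definition intmx (R : realType) (m k : nat) (M : 'M[int]_(m, k)) : 'M[R]_(m, k) :=
  map_mx (fun z : int => z%:~R) M.

Definition supn (R : realType) (m k : nat) (M : 'M[R]_(m, k)) : R :=
  \big[Num.max/0]_(i < m) \big[Num.max/0]_(j < k) `|M i j|.

Definition omega_set (R : realType) (s n : nat) (A : 'M[R]_(s.+1, n - s)) : set R :=
  [set u : R | 0 < u /\
     ~ finite_set [set q : 'cV[int]_(n - s) | exists p : 'cV[int]_(s.+1),
          supn (A *m intmx R q + intmx R p) < (supn (intmx R q)) `^ (- u)]].

Definition omega (R : realType) (s n : nat) (A : 'M[R]_(s.+1, n - s)) : \bar R :=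
  ereal_sup [set u%:E | u in omega_set A].

Definition xtilde (R : realType) (s : nat) (x : 'rV[R]_s) : 'rV[R]_(s.+1) :=
  row_mx (1 : 'rV[R]_1) x.

Definition Lset (R : realType) (s n : nat) (A : 'M[R]_(s.+1, n - s)) : set 'rV[R]_(s + (n - s)) :=
  [set row_mx x (xtilde x *m A) | x in [set: 'rV[R]_s]].

From HB Require Import structures.
From mathcomp Require Import all_boot all_order all_algebra.
From mathcomp Require Import all_classical all_reals all_analysis.
From mathcomp Require Import zify ring lra.
Import Order.TTheory GRing.Theory Num.Theory.
Local Open Scope classical_set_scope.
Local Open Scope ring_scope.

Set Implicit Arguments. Unset Strict Implicit. Unset Printing Implicit Defensive.

(* Choose u with v < u < omega(A) and, for each of the infinitely many q
   admitting some p = (p0, p') with |Aq + p| < |q|^-u, such a p; take the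
   pairs (p0, (p', q)).  For y = (x, x~A) in L, y.(p', q) + p0 = x~.(Aq + p)
   is at most C_x |q|^-u, while |(p', q)| lies between |q| and
   (1 + |A|_1) |q|.  As u > v, C_x |q|^-u < |(p', q)|^-v once |q| exceeds a
   threshold depending only on x, and only finitely many integer q lie below
   it. *)

Section SupNorm.
Variable R : realType.

Definition l1n m k (M : 'M[R]_(m, k)) : R := \sum_i \sum_j `|M i j|.

Lemma supn_ge0 m k (M : 'M[R]_(m, k)) : 0 <= supn M.
Proof.
rewrite /supn; apply: (big_ind (fun x => 0 <= x)) => // [a b ha hb|i _].
  by rewrite le_max ha.
apply: (big_ind (fun x => 0 <= x)) => // a b ha hb.
by rewrite le_max ha.
Qed.

Lemma norm_le_supn m k (M : 'M[R]_(m, k)) i j : `|M i j| <= supn M.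
Proof.
rewrite /supn; apply: le_trans (le_bigmax _ _ i).
exact: (le_bigmax _ (fun j => `|M i j|) j).
Qed.

Lemma supn_le m k (M : 'M[R]_(m, k)) c :
  0 <= c -> (forall i j, `|M i j| <= c) -> supn M <= c.
Proof. by move=> c0 hM; apply: bigmax_le => // i _; apply: bigmax_le. Qed.

Lemma l1n_ge0 m k (M : 'M[R]_(m, k)) : 0 <= l1n M.
Proof. by apply: sumr_ge0 => i _; apply: sumr_ge0. Qed.

Lemma supn_sub_le m k (M N : 'M[R]_(m, k)) : supn (M - N) <= supn M + supn N.
Proof.
apply: supn_le => [|i j]; first by rewrite addr_ge0 ?supn_ge0.
by rewrite !mxE (le_trans (ler_normB _ _)) // lerD ?norm_le_supn.
Qed.

Lemma supn_mulmx_le m k l (B : 'M[R]_(m, k)) (M : 'M[R]_(k, l)) :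
  supn (B *m M) <= l1n B * supn M.
Proof.
apply: supn_le => [|i j]; first by rewrite mulr_ge0 ?l1n_ge0 ?supn_ge0.
rewrite mxE; apply: le_trans (ler_norm_sum _ _ _) _.
apply: (@le_trans _ _ (\sum_r `|B i r| * supn M)).
  by apply: ler_sum => r _; rewrite normrM ler_wpM2l ?norm_le_supn.
rewrite -mulr_suml; apply: ler_wpM2r; first exact: supn_ge0.
rewrite /l1n (bigD1 i) //= lerDl.
by apply: sumr_ge0 => i' _; apply: sumr_ge0.
Qed.

Lemma supn_col_mx m1 m2 k (M1 : 'M[R]_(m1, k)) (M2 : 'M[R]_(m2, k)) :
  supn (col_mx M1 M2) = Num.max (supn M1) (supn M2).
Proof.
apply/le_anti/andP; split.
  apply: supn_le => [|i j]; first by rewrite le_max supn_ge0.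
  by case: (split_ordP i) => i' ->; rewrite ?col_mxEu ?col_mxEd le_max norm_le_supn ?orbT.
rewrite ge_max; apply/andP; split; apply: supn_le; rewrite ?supn_ge0 // => i j.
  by rewrite -(col_mxEu M1 M2) norm_le_supn.
by rewrite -(col_mxEd M1 M2) norm_le_supn.
Qed.

Lemma supn_dsubmx_le m1 m2 k (M : 'M[R]_(m1 + m2, k)) : supn (dsubmx M) <= supn M.
Proof. by rewrite -{2}(vsubmxK M) supn_col_mx le_max lexx orbT. Qed.

Lemma finite_supn_intmx_le m k (T : R) :
  finite_set [set M : 'M[int]_(m, k) | supn (intmx R M) <= T].
Proof.
have [N TN] : exists N : nat, T <= N%:R.
  exists (Num.Def.archi_bound `|T|).
  exact: le_trans (ler_norm T) (ltW (archi_boundP (normr_ge0 T))).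
pose g (f : {ffun 'I_m * 'I_k -> 'I_(N + N).+1}) : 'M[int]_(m, k) :=
  \matrix_(i, j) ((f (i, j) : nat)%:Z - N%:Z).
apply: sub_finite_set (finite_image g (@finite_finset _ setT)).
move=> M hM; exists [ffun ij => inord (absz (M ij.1 ij.2 + N%:Z))] => //.
apply/matrixP => i j.
have MN : `|M i j| <= N%:Z.
  rewrite -(ler_int R) intr_norm.
  by have := le_trans (norm_le_supn (intmx R M) i j) (le_trans hM TN); rewrite mxE.
rewrite !mxE ffunE /= inordK; last by lia.
by rewrite gez0_abs ?addrK //; lia.
Qed.

End SupNorm.

Section Approximation.
Variable R : realType.

Definition height_threshold (X K u v : R) : R :=
  Num.max 1 (expR ((ln X + `|v| * ln K) / (u - v))).

Lemma mul_powRN_le_powRN (X K u v t Q : R) :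
  0 < X -> 1 <= K -> v < u -> height_threshold X K u v <= t ->
  t <= Q -> Q <= K * t -> X * t `^ (- u) <= Q `^ (- v).
Proof.
move=> X0 K1 vu; rewrite ge_max => /andP[t1 tM] tQ QKt.
have t0 : 0 < t by apply: lt_le_trans ltr01 t1.
have K0 : 0 < K by apply: lt_le_trans ltr01 K1.
have Q0 : 0 < Q by apply: lt_le_trans t0 tQ.
have lnt0 : 0 <= ln t by apply: ln_ge0.
have lnK0 : 0 <= ln K by apply: ln_ge0.
have lntQ : ln t <= ln Q by rewrite ler_ln ?posrE.
have lnQKt : ln Q <= ln K + ln t by rewrite -lnM ?posrE // ler_ln ?posrE ?mulr_gt0.
have hM : ln X + `|v| * ln K <= (u - v) * ln t.
  by rewrite [_ * ln t]mulrC -ler_pdivrMr ?subr_gt0 // -ler_expR lnK ?posrE.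
rewrite /powR !gt_eqF // -{1}[X]lnK ?posrE // -expRD ler_expR.
have [v0|v0] := lerP 0 v.
  rewrite ger0_norm // in hM.
  have := ler_wpM2l v0 lnQKt; nra.
rewrite ltr0_norm // in hM.
have nv0 : 0 <= - v by lra.
have := ler_wpM2l nv0 lntQ; have := mulr_ge0 nv0 lnK0; nra.
Qed.

Lemma supn_col_dsubmx_le m1 m2 k l (A : 'M[R]_(m1 + m2, k)) (Q : 'M[R]_(k, l)) P :
  supn (A *m Q + P) <= 1 -> 1 <= supn Q ->
  supn (col_mx (dsubmx P) Q) <= (1 + l1n A) * supn Q.
Proof.
move=> E1 Q1; rewrite supn_col_mx ge_max; apply/andP; split; last first.
  by rewrite mulrDl mul1r lerDl mulr_ge0 ?l1n_ge0 ?supn_ge0.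
apply: le_trans (supn_dsubmx_le P) _.
have -> : P = (A *m Q + P) - A *m Q by rewrite addrC addKr.
apply: le_trans (supn_sub_le _ _) _.
rewrite mulrDl mul1r lerD //; first exact: le_trans E1 Q1.
exact: supn_mulmx_le.
Qed.

Lemma xtilde_mulmx s (x : 'rV[R]_s) (P : 'cV[R]_(1 + s)) :
  (xtilde x *m P) 0 0 = usubmx P 0 0 + (x *m dsubmx P) 0 0.
Proof.
transitivity ((row_mx (1 : 'rV[R]_1) x *m col_mx (usubmx P) (dsubmx P)) 0 0).
  by rewrite vsubmxK.
by rewrite mul_row_col mul1mx mxE.
Qed.

Lemma row_xtilde_mulmx_col s k (A : 'M[R]_(s.+1, k)) (x : 'rV[R]_s) (Q : 'cV[R]_k)
    (P : 'cV[R]_(1 + s)) :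
  (row_mx x (xtilde x *m A) *m col_mx (dsubmx P) Q) 0 0 + usubmx P 0 0
  = (xtilde x *m (A *m Q + P)) 0 0.
Proof.
by rewrite mul_row_col mulmxDr mulmxA mxE [RHS]mxE xtilde_mulmx; ring.
Qed.

Lemma row_xtilde_approx s k (A : 'M[R]_(s.+1, k)) (x : 'rV[R]_s) (Q : 'cV[R]_k)
    (P : 'cV[R]_(1 + s)) (u v : R) :
  0 <= u -> v < u -> supn (A *m Q + P) < supn Q `^ (- u) ->
  height_threshold (l1n (xtilde x) + 1) (1 + l1n A) u v < supn Q ->
  `|(row_mx x (xtilde x *m A) *m col_mx (dsubmx P) Q) 0 0 + usubmx P 0 0|
    < supn (col_mx (dsubmx P) Q) `^ (- v).
Proof.
move=> u0 vu EQ tQ; set t := supn Q in EQ tQ *; set E := A *m Q + P in EQ *.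
have t1 : 1 <= t by apply/ltW/(le_lt_trans _ tQ); rewrite le_max lexx.
have E1 : supn E <= 1.
  have : t `^ (- u) <= t `^ 0 by apply: ler_powR; rewrite ?oppr_le0.
  by rewrite powRr0 => /(lt_le_trans EQ)/ltW.
have X0 : 0 < l1n (xtilde x) + 1 by rewrite ltr_wpDl ?l1n_ge0.
rewrite row_xtilde_mulmx_col -/E.
apply: le_lt_trans (norm_le_supn _ 0 0) _.
apply: le_lt_trans (supn_mulmx_le _ _) _.
apply: (@le_lt_trans _ _ ((l1n (xtilde x) + 1) * supn E)).
  by apply: ler_wpM2r; [exact: supn_ge0 | rewrite lerDl].
apply: (@lt_le_trans _ _ ((l1n (xtilde x) + 1) * t `^ (- u))).
  by rewrite ltr_pM2l.
apply: (mul_powRN_le_powRN X0 _ vu (ltW tQ)).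
- by rewrite lerDl l1n_ge0.
- by rewrite supn_col_mx le_max lexx orbT.
- exact: supn_col_dsubmx_le.
Qed.

End Approximation.

Theorem lemma5p4 (R : realType) (s n : nat) (hsn : (s < n)%N)
  (A : 'M[R]_(s.+1, n - s)) (v : R) :
  (v%:E < omega A)%E ->
  exists AA : set (int * 'cV[int]_(s + (n - s))),
    ~ finite_set AA /\
    forall y : 'rV[R]_(s + (n - s)), Lset A y ->
      finite_set (AA `\` [set pq | `|(y *m intmx R pq.2) 0 0 + (pq.1)%:~R|
                                     < (supn (intmx R pq.2)) `^ (- v)]).
Proof.
move=> /ereal_sup_gt [_ [u [u0 Sinf] <-]]; rewrite lte_fin => vu.
set S := [set q | _] in Sinf.
have /choice [p hp] : forall q, exists p : 'cV[int]_(1 + s), S q ->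
    supn (A *m intmx R q + intmx R p) < supn (intmx R q) `^ (- u).
  move=> q; have [[p Sqp]|nSq] := pselect (S q); first by exists p.
  by exists 0 => /nSq.
pose F q := (usubmx (p q) 0 0, col_mx (dsubmx (p q)) q).
exists (F @` S); split.
  move=> /(finite_image (fun pq => dsubmx pq.2)) FSfin; apply/Sinf/(sub_finite_set _ FSfin).
  by move=> q Sq; exists (F q); [exists q | rewrite /= col_mxKd].
move=> y [x _ <-].
set T := height_threshold (l1n (xtilde x) + 1) (1 + l1n A) u v.
apply: sub_finite_set (finite_image F (finite_supn_intmx_le _ _ T)).
move=> _ [[q Sq <-] Fq_far]; exists q => //=.
rewrite leNgt; apply/negP => Tq; apply: Fq_far => /=.
have -> : (usubmx (p q) 0 0)%:~R = usubmx (intmx R (p q)) 0 0 by rewrite !mxE.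
by rewrite /intmx map_col_mx map_dsubmx; apply: row_xtilde_approx (ltW u0) vu (hp q Sq) Tq.
Qed.
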